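(* Let $G$ be a graph with a type-2A 1-planar drawing $D$, and let $X$ and $Y$ be two distinct vertex subsets of $G$. Let $G'$ be the graph obtained from $G$ by removing every edge of $E_G(X,Y)$ that crosses (in $D$) some edge with both endvertices in $X$. If $D$ is nice, then $N_{G'}(X,Y)=N_G(X,Y)$.
   Context: All drawings are good (no edge crosses itself, two edges cross at most once, adjacent edges do not cross). A drawing is 1-planar if every edge is crossed at most once. If edges $ab$ and $cd$ cross in a 1-planar drawing of $G$, the associated edges of this crossing are the edges of $G[\{a,b,c,d\}]$ other than $ab$ and $cd$. A 1-planar drawing is type-2A if every crossing has at least two associated edges, and every crossing with exactly two associated edges has these two edges disjoint. A 1-planar drawing is nice if for every pair of crossing edges, all of their associated edges are uncrossed. For vertex sets $V_1,V_2$, $E_G(V_1,V_2)$ is the set of edges of $G$ with one endvertex in $V_1$ and the other in $V_2$, and $N_G(V_1,V_2)=\{v\in V_2: v \text{ is adjacent in } G \text{ to some vertex of } V_1\}$. *)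

From mathcomp Require Import all_boot.
Set Implicit Arguments. Unset Strict Implicit. Unset Printing Implicit Defensive.

Definition simple_graph (T : finType) (e : rel T) : Prop :=
  symmetric e /\ irreflexive e.

Definition edges (T : finType) (e : rel T) : {set {set T}} :=
  [set [set u; v] | u in T, v in T & e u v].

(* Combinatorial crossing data of a drawing: cr f g means edges f and g
   cross.  A good drawing: cr is symmetric, relates only edges, and crossing
   edges are disjoint (no self-crossing, adjacent edges do not cross);
   "two edges cross at most once" is built in since cr is a relation. *)
Definition good_drawing (T : finType) (e : rel T) (cr : rel {set T}) : Prop :=
  [/\ forall f g, cr f g = cr g f,
      forall f g, cr f g -> (f \in edges e) && (g \in edges e)
    & forall f g, cr f g -> [disjoint f & g]].

Definition one_planar (T : finType) (cr : rel {set T}) : Prop :=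
  forall f g h, cr f g -> cr f h -> g = h.

Definition assoc (T : finType) (e : rel T) (f g : {set T}) : {set {set T}} :=
  [set h in edges e | (h \subset f :|: g) && (h != f) && (h != g)].

Definition type2A (T : finType) (e : rel T) (cr : rel {set T}) : Prop :=
  forall f g, cr f g ->
    2 <= #|assoc e f g| /\
    (#|assoc e f g| = 2 ->
       forall h1 h2, h1 \in assoc e f g -> h2 \in assoc e f g -> h1 != h2 ->
         [disjoint h1 & h2]).

Definition nice (T : finType) (e : rel T) (cr : rel {set T}) : Prop :=
  forall f g, cr f g -> forall h, h \in assoc e f g -> forall k, ~~ cr h k.

Definition nbhd (T : finType) (e : rel T) (V1 V2 : {set T}) : {set T} :=
  [set v in V2 | [exists u in V1, e u v]].

Definition remove_XY_cross (T : finType) (e : rel T) (cr : rel {set T})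
    (X Y : {set T}) : rel T :=
  fun u v => e u v &&
    ~~ ((((u \in X) && (v \in Y)) || ((u \in Y) && (v \in X))) &&
        [exists g : {set T}, cr [set u; v] g && (g \subset X)]).

From mathcomp Require Import all_boot.

(* If the edge uv with u in X is deleted, it crosses an edge ab with a, b in X.
   Were neither a nor b adjacent to v, the only possible associated edges of
   this crossing would be ua and ub; type-2A then forces exactly these two and
   requires them to be disjoint, which they are not.  So some w in {a, b} is
   adjacent to v; wv is associated with the crossing, hence uncrossed because
   the drawing is nice, so it survives in G' and still joins v to X. *)

Set Implicit Arguments.
Unset Strict Implicit.
Unset Printing Implicit Defensive.

Section SimpleGraph.
Variables (T : finType) (e : rel T).
Hypotheses (esym : symmetric e) (eirr : irreflexive e).

Lemma edgesP h : h \in edges e -> exists x y, e x y /\ h = [set x; y].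
Proof. by case/imset2P => x y _; rewrite inE => exy ->; exists x, y. Qed.

Lemma edge_set2 x y : e x y -> [set x; y] \in edges e.
Proof. by move=> exy; apply/imset2P; exists x y; rewrite ?inE. Qed.

Lemma assoc_non_adjacent u v a b :
  ~~ e a v -> ~~ e b v ->
  assoc e [set u; v] [set a; b] \subset [set [set u; a]; [set u; b]].
Proof.
(* Of the six pairs inside {u, v, a, b}, uv and ab are excluded by definition,
   av and bv by hypothesis. *)
rewrite -!(esym v) => /negbTE nva /negbTE nvb.
apply/subsetP => _ /setIdP[/edgesP[x [y [exy ->]]] /andP[/andP[sub]]].
move: exy; have := subsetP sub y (set22 x y); have := subsetP sub x (set21 x y).
rewrite !inE -!orbA => /or4P[]/eqP-> /or4P[]/eqP->;
  rewrite ?eirr ?(esym _ v) ?nva ?nvb ?eqxx ?orbT //;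
  by rewrite setUC ?eqxx ?orbT.
Qed.

Lemma assoc_between (f g : {set T}) x y :
  [disjoint f & g] -> x \in f -> y \in g -> e x y -> [set x; y] \in assoc e f g.
Proof.
move=> fg xf yg exy; rewrite inE edge_set2 //=.
rewrite subUset !sub1set !inE xf yg orbT /=.
apply/andP; split; apply/eqP => xy.
  by have := disjointFl fg yg; rewrite -xy set22.
by have := disjointFr fg xf; rewrite -xy set21.
Qed.

Lemma type2A_cross_adjacent cr u v a b :
  good_drawing e cr -> type2A e cr -> cr [set u; v] [set a; b] -> a != b ->
  e a v || e b v.
Proof.
move=> [_ _ cr_disj] t2 uv_ab neq_ab; have uv_disj_ab := cr_disj _ _ uv_ab.
apply: contraT; rewrite negb_or => /andP[nav nbv].
have [two_le two_disj] := t2 _ _ uv_ab.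
have : u \notin [set a; b] by rewrite (disjointFr uv_disj_ab) ?set21.
rewrite !inE negb_or => /andP[neq_ua neq_ub].
have neq_uaub : [set u; a] != [set u; b].
  apply: contraNneq neq_ab => E; have : b \in [set u; a] by rewrite E set22.
  by rewrite !inE eq_sym (negbTE neq_ub) eq_sym.
have assoc_eq : assoc e [set u; v] [set a; b] = [set [set u; a]; [set u; b]].
  apply/eqP; rewrite eqEcard assoc_non_adjacent //= cards2.
  exact: leq_ltn_trans (leq_b1 _) two_le.
have card_assoc : #|assoc e [set u; v] [set a; b]| = 2.
  by rewrite assoc_eq cards2 neq_uaub.
(* ua and ub are the two associated edges, and they share u. *)
have := two_disj card_assoc [set u; a] [set u; b].
rewrite assoc_eq !inE !eqxx orbT => /(_ isT isT neq_uaub) /disjointFr.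
by move/(_ u (set21 u a)); rewrite set21.
Qed.

Lemma remove_XY_cross_uncrossed cr (X Y : {set T}) u v :
  e u v -> (forall g, ~~ cr [set u; v] g) -> remove_XY_cross e cr X Y u v.
Proof.
move=> euv uncrossed; rewrite /remove_XY_cross euv negb_and; apply/orP; right.
by apply/existsPn => g; rewrite negb_and uncrossed.
Qed.

Lemma remove_XY_cross_reroute cr (X Y : {set T}) u v :
  good_drawing e cr -> type2A e cr -> nice e cr -> u \in X -> e u v ->
  exists2 w, w \in X & remove_XY_cross e cr X Y w v.
Proof.
move=> good t2 nice_cr uX euv.
have [crsym cr_edges cr_disj] := good.
case removed: [exists g, cr [set u; v] g && (g \subset X)]; last first.
  by exists u; rewrite // /remove_XY_cross euv removed andbF.
case/existsP: removed => g /andP[uv_g gX].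
case/andP: (cr_edges _ _ uv_g) => _ /edgesP[a [b [eab g_ab]]]; subst g.
have neq_ab : a != b by apply: contraTneq eab => ->; rewrite eirr.
have [w w_ab ewv] : exists2 w, w \in [set a; b] & e w v.
  case/orP: (type2A_cross_adjacent good t2 uv_g neq_ab) => ?;
    by [exists a; rewrite ?set21 | exists b; rewrite ?set22].
exists w; first exact: subsetP gX w w_ab.
rewrite crsym in uv_g.
have wv_assoc := assoc_between (cr_disj _ _ uv_g) w_ab (set22 u v) ewv.
exact: remove_XY_cross_uncrossed ewv (nice_cr _ _ uv_g _ wv_assoc).
Qed.

End SimpleGraph.

Theorem lemma9 (T : finType) (e : rel T) (cr : rel {set T}) (X Y : {set T}) :
  simple_graph e -> good_drawing e cr -> one_planar cr -> type2A e cr ->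
  X != Y -> nice e cr ->
  nbhd (remove_XY_cross e cr X Y) X Y = nbhd e X Y.
Proof.
move=> [esym eirr] good _ t2 _ nice_cr.
apply/setP => v; rewrite !inE; apply: andb_id2l => _.
apply/existsP/existsP => [[u /andP[uX /andP[euv _]]] | [u /andP[uX euv]]].
  by exists u; rewrite uX euv.
have [w wX rwv] := remove_XY_cross_reroute esym eirr Y good t2 nice_cr uX euv.
by exists w; rewrite wX.
Qed.
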